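(* Fix $c_p>0$, a finite set $\mathcal{T}$ of window lengths, $n\ge1$ and a fixed sequence of inter-arrival times $x_1,\dots,x_n>0$. Consider a randomized custom keep-alive policy which, given report $\hat\theta\ge0$, produces random window lengths $\tau_{\hat\theta,\mathcal{H}_{i-1}}$ used for arrival $i$, and charge externality payments $p_i=wm(\tau_{\hat\theta,\mathcal{H}_{i-1}},x_i)$. Define $$\kappa(\hat\theta)=\Big(\mathbb{E}\sum_{i=1}^n wm(\tau_{\hat\theta,\mathcal{H}_{i-1}},x_i),\ \mathbb{E}\sum_{i=1}^n cs(\tau_{\hat\theta,\mathcal{H}_{i-1}},x_i)\Big),\qquad \kappa(\tau)=\Big(\sum_{i=1}^n wm(\tau,x_i),\ \sum_{i=1}^n cs(\tau,x_i)\Big)\ (\tau\in\mathcal{T}),$$ and $$D(\theta)=\max\Big(0,\ \sup_{\hat\theta\ge0}\ \min_{\tau\in\mathcal{T}}\big(\kappa(\tau)-\kappa(\hat\theta)\big)\cdot(1,\theta)\Big).$$ Suppose $R_n$ bounds the policy's expected regret under truthful reporting: for every $\theta\ge0$, $\kappa(\theta)\cdot(1,\theta)-\min_{\tau\in\mathcal{T}}\kappa(\tau)\cdot(1,\theta)\le R_n$. Then for every true type $\theta\ge0$ and every report $\hat\theta\ge0$, the customer's expected total cost satisfies $$\mathbb{E}\sum_{i=1}^n \mathrm{cost}_i(\text{report }\theta)\le\mathbb{E}\sum_{i=1}^n\mathrm{cost}_i(\text{report }\hat\theta)+R_n+D(\theta).$$ Consequently, externality payments are $\varepsilon$-IC with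 $\varepsilon=\frac1n\big(R_n+\sup_{\theta}D(\theta)\big)$.
   Context: For a window length $\tau\in[0,\infty]$ and inter-arrival time $x>0$: $cs(\tau,x)=1$ if $x>\tau$ and $0$ otherwise; $wm(\tau,x)=c_px$ if $x\le\tau$ and $c_p\tau$ if $x>\tau$. $\mathcal{H}_{i}=(x_1,\dots,x_i)$ is the history of inter-arrival times. A customer with true cold-start cost $\theta\ge0$ reporting $\hat\theta$ incurs on arrival $i$ the cost $\mathrm{cost}_i=p_i+\theta\cdot cs(\tau_{\hat\theta,\mathcal{H}_{i-1}},x_i)$. Expectations are over the randomness of the policy. A payment rule is $\varepsilon$-IC if for all $\theta,\hat\theta$ the expected total cost of truthful reporting is at most the expected total cost of reporting $\hat\theta$ plus $n\varepsilon$. (An example of such a policy is exponential weights, choosing $\tau_j\in\mathcal{T}$ with probability proportional to $e^{-L_{i-1}(\tau_j,\mathcal{H}_{i-1},\hat\theta)}$, where $L_{i-1}(\tau,\mathcal{H}_{i-1},\theta)=\sum_{j\le i-1}wm(\tau,x_j)+\theta\sum_{j\le i-1}cs(\tau,x_j)$.) *)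

From mathcomp Require Import all_boot all_order all_algebra.
From mathcomp Require Import all_classical all_reals all_analysis measurable_realfun.
Set Implicit Arguments. Unset Strict Implicit. Unset Printing Implicit Defensive.
Import Order.TTheory GRing.Theory Num.Theory.
Local Open Scope ring_scope.
Local Open Scope ereal_scope.

Section KeepAlive.
Context {R : realType}.

(* Window lengths live in [0, +oo], represented in \bar R (+oo = infinite window). *)
Definition cs (tau : \bar R) (x : R) : R := if tau < x%:E then 1%R else 0%R.

Definition wm (cp : R) (tau : \bar R) (x : R) : R :=
  if x%:E <= tau then (cp * x)%R else (cp * fine tau)%R.

(* A randomized keep-alive policy: given the report theta_hat and the history
   H_{i-1} (the seq of past inter-arrival times), it returns a random window
   length (a function of the outcome of the policy's randomness). *)
Definition policy (Omega : Type) := R -> seq R -> Omega -> \bar R.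

Variables (d : measure_display) (Omega : measurableType d) (P : probability Omega R).
Variables (cp : R) (xs : seq R) (pol : policy Omega).

(* window used for arrival i (0-indexed): tau_{theta_hat, H_{i-1}} with H_{i-1} = take i xs *)
Definition win (th_hat : R) (i : nat) : Omega -> \bar R := pol th_hat (take i xs).

Definition Ewm (th_hat : R) : \bar R :=
  \int[P]_w (\sum_(i < size xs) wm cp (win th_hat i w) (nth 0%R xs i))%:E.

Definition Ecs (th_hat : R) : \bar R :=
  \int[P]_w (\sum_(i < size xs) cs (win th_hat i w) (nth 0%R xs i))%:E.

Definition kappa_pol_dot (th_hat th : R) : \bar R := Ewm th_hat + th%:E * Ecs th_hat.

Definition kappa_tau_dot (tau : \bar R) (th : R) : R :=
  (\sum_(i < size xs) wm cp tau (nth 0%R xs i) +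
   th * \sum_(i < size xs) cs tau (nth 0%R xs i))%R.

Definition minT (T : seq (\bar R)) (f : \bar R -> \bar R) : \bar R :=
  \big[mine/+oo]_(t <- T) f t.

Definition Dfun (T : seq (\bar R)) (th : R) : \bar R :=
  maxe 0 (ereal_sup [set minT T (fun t => (kappa_tau_dot t th)%:E - kappa_pol_dot th_hat th)
                    | th_hat in [set z : R | (0 <= z)%R]]).

(* expected total cost of a customer of true type theta reporting theta_hat,
   with externality payments p_i = wm(tau_i, x_i):
   E sum_i cost_i = E sum_i (p_i + theta * cs(tau_i, x_i)) *)
Definition Ecost (th_hat th : R) : \bar R :=
  \int[P]_w (\sum_(i < size xs)
     (wm cp (win th_hat i w) (nth 0%R xs i) + th * cs (win th_hat i w) (nth 0%R xs i)))%:E.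

Definition eps_IC (eps : \bar R) : Prop :=
  forall th th_hat : R, (0 <= th)%R -> (0 <= th_hat)%R ->
    Ecost th th <= Ecost th_hat th + (size xs)%:R%:E * eps.

End KeepAlive.

From mathcomp Require Import all_boot all_order all_algebra.
From mathcomp Require Import all_classical all_reals all_analysis measurable_realfun.
From mathcomp Require Import lra.
Import Order.TTheory GRing.Theory Num.Theory.
Local Open Scope ring_scope.
Local Open Scope ereal_scope.
Local Open Scope classical_set_scope.

(* With externality payments the expected cost of reporting th_hat is
   kappa(th_hat).(1, th), so truthful cost minus the best fixed window cost is
   the regret (at most Rn), while the best fixed window cost minus the cost of
   any other report th_hat is at most min_tau (kappa(tau) - kappa(th_hat)).(1, th)
   <= D(th).  Adding the two bounds gives the first claim; dividing the uniform
   bound Rn + sup D by n gives eps-IC. *)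

Lemma cs_ge0 {R : realType} (tau : \bar R) (x : R) : (0 <= cs tau x)%R.
Proof. by rewrite /cs; case: ifP. Qed.

Lemma wm_ge0 {R : realType} (cp : R) (tau : \bar R) (x : R) :
  (0 <= cp)%R -> 0 <= tau -> (0 <= x)%R -> (0 <= wm cp tau x)%R.
Proof.
by move=> cp0 tau0 x0; rewrite /wm; case: ifP => _; rewrite mulr_ge0 ?fine_ge0.
Qed.

Lemma measurable_cs {R : realType} {d} {Omega : measurableType d}
    (f : Omega -> \bar R) (x : R) :
  measurable_fun setT f -> measurable_fun setT (fun w => cs (f w) x).
Proof.
move=> mf; apply: measurable_fun_ifT => //; apply: (measurable_fun_bool true).
rewrite setTI (_ : _ @^-1` _ = [set w | f w < x%:E]); last by apply/seteqP; split => w /=.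
by rewrite -[X in measurable X]setTI; apply: measurable_lte.
Qed.

Lemma measurable_wm {R : realType} {d} {Omega : measurableType d}
    (f : Omega -> \bar R) (cp x : R) :
  measurable_fun setT f -> measurable_fun setT (fun w => wm cp (f w) x).
Proof.
move=> mf; apply: measurable_fun_ifT => //.
  apply: (measurable_fun_bool true).
  rewrite setTI (_ : _ @^-1` _ = [set w | x%:E <= f w]); last by apply/seteqP; split => w /=.
  by rewrite -[X in measurable X]setTI; apply: measurable_lee.
by apply: measurable_funM => //; apply: measurableT_comp.
Qed.

Lemma minT_subr {R : realType} (T : seq (\bar R)) (f : \bar R -> \bar R) (a : \bar R) :
  minT T f - a <= minT T (fun t => f t - a).
Proof.
rewrite /minT [X in _ <= X]big_seq; apply: le_bigmin => [|t tT]; first exact: leey.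
by apply: leeB => //; apply: ge_bigmin_seq.
Qed.

(* -oo absorbs in \bar R: with a or D equal to -oo the right-hand side collapses. *)
Lemma lee_subr_chain {R : realType} (k m a D : \bar R) (r : R) :
  0 <= a -> 0 <= D -> k - m <= r%:E -> m - a <= D -> k <= a + r%:E + D.
Proof.
move: k m a D => [k| |] [m| |] [a| |] [D| |] //=; rewrite ?leey ?leNye //.
by move=> _ _; rewrite -!EFinD !lee_fin; lra.
Qed.

Section ExternalityPayments.
Variables (R : realType) (d : measure_display) (Omega : measurableType d).
Variables (P : probability Omega R) (cp : R) (xs : seq R) (pol : @policy R Omega).
Hypotheses (cp_gt0 : (0 < cp)%R) (xs_gt0 : forall x, x \in xs -> (0 < x)%R).
Hypothesis pol_meas : forall th_hat h, measurable_fun setT (pol th_hat h).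
Hypothesis pol_ge0 : forall th_hat h w, 0 <= pol th_hat h w.

Lemma nth_xs_ge0 i : (0 <= nth 0 xs i)%R.
Proof.
by case: (ltnP i (size xs)) => hi; [rewrite ltW // xs_gt0 // mem_nth | rewrite nth_default].
Qed.

Lemma wm_win_ge0 th_hat i w : (0 <= wm cp (win xs pol th_hat i w) (nth 0 xs i))%R.
Proof. by apply: wm_ge0; [exact: ltW | exact: pol_ge0 | exact: nth_xs_ge0]. Qed.

Lemma Ecost_ge0 th_hat th : (0 <= th)%R -> 0 <= Ecost P cp xs pol th_hat th.
Proof.
move=> th0; apply: integral_ge0 => w _; rewrite lee_fin sumr_ge0 // => i _.
by rewrite addr_ge0 ?mulr_ge0 ?cs_ge0 ?wm_win_ge0.
Qed.

Lemma Ecost_kappa_pol_dot th_hat th :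
  (0 <= th)%R -> Ecost P cp xs pol th_hat th = kappa_pol_dot P cp xs pol th_hat th.
Proof.
move=> th0.
have mwm : measurable_fun setT (fun w =>
    (\sum_(i < size xs) wm cp (win xs pol th_hat i w) (nth 0 xs i))%:E).
  by apply/measurable_EFinP/measurable_sum => i; apply/measurable_wm/pol_meas.
have mcs : measurable_fun setT (fun w =>
    (\sum_(i < size xs) cs (win xs pol th_hat i w) (nth 0 xs i))%:E).
  by apply/measurable_EFinP/measurable_sum => i; apply/measurable_cs/pol_meas.
have cs_sum_ge0 w : 0 <= (\sum_(i < size xs) cs (win xs pol th_hat i w) (nth 0 xs i))%:E.
  by rewrite lee_fin sumr_ge0 // => i _; apply: cs_ge0.
rewrite /Ecost /kappa_pol_dot /Ewm /Ecs.
under eq_integral do rewrite big_split /= -mulr_sumr EFinD EFinM.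
rewrite ge0_integralD //; last 2 first.
- by move=> w _; rewrite mule_ge0.
- exact: emeasurable_funM.
- by rewrite ge0_integralZl_EFin.
- by move=> w _; rewrite lee_fin sumr_ge0 // => i _; apply: wm_win_ge0.
Qed.

Lemma Dfun_ge0 T th : 0 <= Dfun P cp xs pol T th.
Proof. by rewrite /Dfun le_max lexx. Qed.

Lemma minT_le_Dfun T th th_hat : (0 <= th_hat)%R ->
  minT T (fun t => (kappa_tau_dot cp xs t th)%:E - kappa_pol_dot P cp xs pol th_hat th)
    <= Dfun P cp xs pol T th.
Proof.
by move=> thh0; rewrite /Dfun le_max; apply/orP; right; apply: ereal_sup_ubound; exists th_hat.
Qed.

Lemma Ecost_truthful_le T (Rn : R) th th_hat : (0 <= th)%R -> (0 <= th_hat)%R ->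
  kappa_pol_dot P cp xs pol th th - minT T (fun t => (kappa_tau_dot cp xs t th)%:E)
    <= Rn%:E ->
  Ecost P cp xs pol th th <= Ecost P cp xs pol th_hat th + Rn%:E + Dfun P cp xs pol T th.
Proof.
move=> th0 thh0 regret; have cost_ge0 := Ecost_ge0 th_hat th th0.
rewrite !Ecost_kappa_pol_dot // in cost_ge0 *.
apply: lee_subr_chain regret _ => //; first exact: Dfun_ge0.
exact: le_trans (minT_subr _ _ _) (minT_le_Dfun _ _ _ thh0).
Qed.

End ExternalityPayments.

Theorem lemma6p4 (R : realType) (d : measure_display) (Omega : measurableType d)
    (P : probability Omega R) (cp : R) (T : seq (\bar R)) (xs : seq R)
    (pol : @policy R Omega) (Rn : R) :
  (0 < cp)%R ->
  T != [::] ->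
  (forall t, t \in T -> 0 <= t) ->
  (0 < size xs)%N ->
  (forall x, x \in xs -> (0 < x)%R) ->
  (forall (th_hat : R) (h : seq R), measurable_fun setT (pol th_hat h)) ->
  (forall (th_hat : R) (h : seq R) w, 0 <= pol th_hat h w) ->
  (forall th : R, (0 <= th)%R ->
     kappa_pol_dot P cp xs pol th th
       - minT T (fun t => (kappa_tau_dot cp xs t th)%:E) <= Rn%:E) ->
  (forall th th_hat : R, (0 <= th)%R -> (0 <= th_hat)%R ->
     Ecost P cp xs pol th th
       <= Ecost P cp xs pol th_hat th + Rn%:E + Dfun P cp xs pol T th)
  /\
  eps_IC P cp xs pol
    ((Rn%:E + ereal_sup [set Dfun P cp xs pol T th | th in [set z : R | (0 <= z)%R]])
       * ((size xs)%:R^-1)%:E).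
Proof.
move=> cp_gt0 _ _ n_gt0 xs_gt0 pol_meas pol_ge0 regret.
have truthful_le th th_hat : (0 <= th)%R -> (0 <= th_hat)%R ->
    Ecost P cp xs pol th th <= Ecost P cp xs pol th_hat th + Rn%:E + Dfun P cp xs pol T th.
  by move=> th0 thh0; apply: Ecost_truthful_le => //; apply: regret.
split=> // th th_hat th0 thh0.
have n_neq0 : ((size xs)%:R != 0 :> R)%R by rewrite pnatr_eq0 -lt0n.
rewrite (muleC ((size xs)%:R)%:E) -muleA -EFinM mulVf // mule1.
apply: le_trans (truthful_le th th_hat th0 thh0) _; rewrite -addeA.
apply: leeD2l; apply: leeD2l.
by apply: ereal_sup_ubound; exists th.
Qed.
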